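(* Let $\Upsilon$ be a tree and let $\|\cdot\|$ be an equivalent norm on $C_0(\Upsilon)$ with the Kadec property. Then the associated function $\mu:\Upsilon\to\mathbb{R}$, $\mu(t)=\inf\{\|\mathbf{1}_{(0,t]}+f'\|: f'\in C_0(\Upsilon),\ \operatorname{supp}f'\subseteq(t,\infty)\}$, has no bad points.
   Context: A tree is a partially ordered set $(\Upsilon,\preceq)$ such that for each $t$ the set $(0,t]=\{s:s\preceq t\}$ is well-ordered; write $(0,t)=\{s:s\prec t\}$, $(t,\infty)=\{u:t\prec u\}$, and let $r(t)$ be the order type of $(0,t)$. Trees are assumed Hausdorff: if $r(t)$ is a limit ordinal and $(0,t)=(0,t')$ then $t=t'$. $\Upsilon$ carries the coarsest topology in which every $(0,t]$ is open and closed, and $C_0(\Upsilon)$ is the space of continuous $f:\Upsilon\to\mathbb{R}$ with $\{|f|\ge\epsilon\}$ compact for every $\epsilon>0$, with the supremum norm; $\mathbf{1}_{(0,t]}$ is the indicator function and $\operatorname{supp}f=\{s:f(s)\ne0\}$. The set $t^+$ of immediate successors of $t$ consists of those $u$ with $(0,u)=(0,t]$. The function $\mu$ is increasing. For an increasing $\rho$, $t$ is good for $\rho$ if there is a finite $F\subseteq t^+$ with $\inf_{u\in t^+\setminus F}\rho(u)>\rho(t)$ (infimum over the empty set $=+\infty$); otherwise bad. A norm has the Kadec property if the weak and norm topologies coincide on its unit sphere. *)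

From Stdlib Require Lists.List.
From HB Require Import structures.
From mathcomp Require Import all_boot all_order all_algebra.
From mathcomp Require Import all_classical all_reals.
From mathcomp Require Import ereal topology normedtype numfun.
Set Implicit Arguments. Unset Strict Implicit. Unset Printing Implicit Defensive.
Import Order.TTheory GRing.Theory Num.Theory.
Import numFieldNormedType.Exports.
Local Open Scope classical_set_scope.
Local Open Scope ring_scope.

Section TreeDefs.
Variable T : Type.
Variable le : T -> T -> Prop.

Definition tlt (s t : T) : Prop := le s t /\ s <> t.

Definition down (t : T) : set T := [set s | le s t].

(* "r(t) is a (nonzero) limit ordinal": (0,t) is nonempty and has no largest element *)
Definition limit_point (t : T) : Prop :=
  (exists s, tlt s t) /\ (forall s, tlt s t -> exists s', tlt s s' /\ tlt s' t).

Definition is_tree : Prop :=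
  [/\ (forall t, le t t),
      (forall s t, le s t -> le t s -> s = t),
      (forall r s t, le r s -> le s t -> le r t),
      (forall (t : T) (A : set T), A `<=` down t -> A !=set0 ->
          exists m, A m /\ forall a, A a -> le m a)
    & (forall t t', limit_point t -> (forall s, tlt s t <-> tlt s t') -> t = t')].

Definition tree_subbasic (A : set T) : Prop :=
  exists t, A = down t \/ A = ~` down t.

(* open sets of the coarsest topology making every (0,t] clopen *)
Definition tree_open (U : set T) : Prop :=
  forall x, U x -> exists l : seq (set T),
    [/\ Stdlib.Lists.List.Forall tree_subbasic l,
        (forall A, Stdlib.Lists.List.In A l -> A x)
      & (forall y, (forall A, Stdlib.Lists.List.In A l -> A y) -> U y)].

Definition tree_compact (K : set T) : Prop :=
  forall C : set (set T), (forall U, C U -> tree_open U) ->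
    K `<=` \bigcup_(U in C) U ->
    exists F : seq (set T), (forall U, Stdlib.Lists.List.In U F -> C U) /\
      K `<=` [set x | exists U, Stdlib.Lists.List.In U F /\ U x].

Variable R : realType.

Definition tree_continuous (f : T -> R) : Prop :=
  forall V : set R, open V -> tree_open (f @^-1` V).

Definition C0 (f : T -> R) : Prop :=
  tree_continuous f /\ forall e : R, 0 < e -> tree_compact [set x | e <= `|f x|].

Definition supnorm (f : T -> R) : R := sup (range (fun x => `|f x|)).

Definition equiv_norm (N : (T -> R) -> R) : Prop :=
  [/\ (forall f, C0 f -> 0 <= N f),
      (forall f, C0 f -> N f = 0 -> forall x, f x = 0),
      (forall (a : R) f, C0 f -> N (fun x => a * f x) = `|a| * N f),
      (forall f g, C0 f -> C0 g -> N (fun x => f x + g x) <= N f + N g)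
    & (exists c C : R, [/\ 0 < c, 0 < C &
         forall f, C0 f -> c * supnorm f <= N f /\ N f <= C * supnorm f])].

Definition cont_lin_functional (N : (T -> R) -> R) (phi : (T -> R) -> R) : Prop :=
  (forall (a b : R) f g, C0 f -> C0 g ->
     phi (fun x => a * f x + b * g x) = a * phi f + b * phi g) /\
  (exists M : R, forall f, C0 f -> `|phi f| <= M * N f).

(* weakly open subsets of C_0(Upsilon) (values outside C_0 are irrelevant) *)
Definition weak_open (N : (T -> R) -> R) (U : set (T -> R)) : Prop :=
  forall f, C0 f -> U f -> exists (l : seq ((T -> R) -> R)) (d : R),
    [/\ 0 < d, Stdlib.Lists.List.Forall (cont_lin_functional N) l &
      forall g, C0 g -> (forall phi, Stdlib.Lists.List.In phi l -> `|phi g - phi f| < d) -> U g].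

Definition norm_open (N : (T -> R) -> R) (U : set (T -> R)) : Prop :=
  forall f, C0 f -> U f -> exists d : R, 0 < d /\
    forall g, C0 g -> N (fun x => g x - f x) < d -> U g.

Definition unit_sphere (N : (T -> R) -> R) : set (T -> R) :=
  [set f | C0 f /\ N f = 1].

Definition kadec (N : (T -> R) -> R) : Prop :=
  forall A : set (T -> R),
    (exists U, weak_open N U /\ A = U `&` unit_sphere N) <->
    (exists V, norm_open N V /\ A = V `&` unit_sphere N).

Definition mu (N : (T -> R) -> R) (t : T) : R :=
  inf [set N (fun s => \1_(down t) s + f s) | f in
        [set f | C0 f /\ forall s, f s <> 0 -> tlt t s]].

Definition succs (t : T) : set T := [set u | forall s, tlt s u <-> le s t].

(* t is good for rho (inf over the empty set = +oo) *)
Definition good (rho : T -> R) (t : T) : Prop :=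
  exists F : set T, [/\ finite_set F, F `<=` succs t &
    ((rho t)%:E < ereal_inf [set (rho u)%:E | u in succs t `\` F])%E].

Definition bad (rho : T -> R) (t : T) : Prop := ~ good rho t.

End TreeDefs.

(* Suppose mu is bad at t and let m = mu(t).  Badness yields infinitely many immediate
   successors u_n of t and functions z_n = 1_(0,u_n] + h_n, with h_n supported above u_n,
   such that N(z_n) -> m.  The perturbations p_n = z_n - 1_(0,t] are uniformly bounded and
   have pairwise disjoint supports [u_n, oo).  Averaging z_n over many indices gives
   N(1_(0,t]) <= m, hence N(1_(0,t]) = m > 0.  For a bounded functional phi, signed sums of
   the p_n have bounded supremum norm, so sum_n |phi(p_n)| < oo and phi(p_n) -> 0; thus
   z_n / N(z_n) -> 1_(0,t] / m weakly, on the unit sphere.  By the Kadec property the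
   convergence would be in norm, but the two functions differ by 1/N(z_n) at u_n. *)
From Pilot Require Import Defs.
From mathcomp Require Import all_boot all_order all_algebra.
From mathcomp Require Import all_classical all_reals.
From mathcomp Require Import ereal topology normedtype numfun sequences.
From mathcomp Require Import ring lra.
From Stdlib Require Import Classical.
From Stdlib Require Lists.List.
Set Implicit Arguments. Unset Strict Implicit. Unset Printing Implicit Defensive.
Import Order.TTheory GRing.Theory Num.Theory.
Import numFieldNormedType.Exports.
Local Open Scope classical_set_scope.
Local Open Scope ring_scope.
Import List (In, Forall).

Section TreeOrder.
Variables (T : Type) (le : T -> T -> Prop).
Hypothesis tree : is_tree le.
Local Notation tl := (tlt le).
Local Notation down := (Defs.down le).

Lemma tree_refl x : le x x.
Proof. by case: tree. Qed.

Lemma tree_antisym x y : le x y -> le y x -> x = y.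
Proof. by case: tree => _ h _ _ _; apply: h. Qed.

Lemma tree_trans x y z : le x y -> le y z -> le x z.
Proof. by case: tree => _ _ h _ _; apply: h. Qed.

Lemma tree_min x (A : set T) : A `<=` down x -> A !=set0 ->
  exists m, A m /\ forall a, A a -> le m a.
Proof. by case: tree => _ _ _ h _; apply: h. Qed.

Lemma tree_le_total x a b : le a x -> le b x -> le a b \/ le b a.
Proof.
move=> ax bx.
have [m [[->|->] min_m]] : exists m, (m = a \/ m = b) /\ forall c, c = a \/ c = b -> le m c.
- by apply: (@tree_min x) => [z [->|->]|] //; exists a; left.
- by left; apply: min_m; right.
- by right; apply: min_m; left.
Qed.

Lemma succs_gt t u : succs le t u -> tl t u.
Proof. by move=> /(_ t) [_]; apply; apply: tree_refl. Qed.

Lemma succs_le_eq t u v : succs le t u -> succs le t v -> le u v -> u = v.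
Proof.
move=> su sv uv; apply: NNPP => nuv.
have [tu ntu] := succs_gt su.
by apply: ntu; apply: tree_antisym tu _; apply/(sv u).
Qed.

(* The least element of (0, b] that is not below s0 has the same strict predecessors
   as s0, so the two coincide by the Hausdorff condition. *)
Lemma limit_point_le s0 b : Defs.limit_point le s0 -> (forall r, tl r s0 -> le r b) -> le s0 b.
Proof.
move=> lim below; have [_ dense] := lim.
have [t' [[t'b t's0] min_t']] : exists m, (le m b /\ ~ tl m s0) /\
    forall c, le c b /\ ~ tl c s0 -> le m c.
  apply: (@tree_min b) => [c []//|]; exists b; split; first exact: tree_refl.
  move=> bs0; have [s' [[bs' nbs'] s's0]] := dense b bs0.
  by apply: nbs'; apply: tree_antisym bs' (below s' s's0).
have same_preds : forall s, tl s s0 <-> tl s t'.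
  move=> s; split=> [[ss0 nss0]|[st' nst']].
  - have [t's|st'] := tree_le_total t'b (below s (conj ss0 nss0)); last first.
      by split=> // est; apply: t's0; rewrite -est.
    exfalso; apply: t's0; split; first exact: tree_trans t's ss0.
    by move=> et; apply: nss0; apply: tree_antisym ss0 _; rewrite -et.
  apply: NNPP => nss0; apply: nst'; apply: (tree_antisym st').
  by apply: min_t'; split=> //; apply: tree_trans st' t'b.
suff -> : s0 = t' by [].
by case: tree => _ _ _ _ hausdorff; apply: hausdorff lim same_preds.
Qed.

(* The basic neighbourhoods of [s0] are the intervals (s, s0] with s < s0,
   encoded by [Some s], and (0, s0], encoded by [None]. *)
Definition lower_end (s0 : T) (o : option T) : Prop :=
  if o is Some s then tl s s0 else True.

Definition basic_nbhd (s0 : T) (o : option T) : set T :=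
  [set r | le r s0 /\ (if o is Some s then ~ le r s else True)].

Lemma basic_nbhd_meet s0 o1 o2 : lower_end s0 o1 -> lower_end s0 o2 ->
  exists o, [/\ lower_end s0 o, basic_nbhd s0 o `<=` basic_nbhd s0 o1
                & basic_nbhd s0 o `<=` basic_nbhd s0 o2].
Proof.
case: o1 o2 => [a|] [b|] /= e1 e2.
- have [ab|ba] := tree_le_total e1.1 e2.1.
    exists (Some b); split=> // r [rs0 nrb]; split=> // ra; apply: nrb.
    exact: tree_trans ra ab.
  exists (Some a); split=> // r [rs0 nra]; split=> // rb; apply: nra.
  exact: tree_trans rb ba.
- by exists (Some a); split=> // r [].
- by exists (Some b); split=> // r [].
- by exists None; split.
Qed.

Lemma nonlimit_isolated s0 : ~ Defs.limit_point le s0 ->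
  exists o, lower_end s0 o /\ basic_nbhd s0 o `<=` [set s0].
Proof.
move=> nlim; have [[s ss0]|no_pred] := classic (exists s, tl s s0); last first.
  exists None; split=> // r [rs0 _]; apply: NNPP => nrs0.
  by apply: no_pred; exists r.
have [s' [s's0 gap]] : exists s, tl s s0 /\ ~ exists s', tl s s' /\ tl s' s0.
  apply: NNPP => h; apply: nlim; split; first by exists s.
  by move=> s1 s1s0; apply: NNPP => h'; apply: h; exists s1.
exists (Some s'); split=> // r [rs0 nrs'] /=; apply: NNPP => nrs0.
have [//|s'r] := tree_le_total rs0 s's0.1.
apply: gap; exists r; split; split=> // e; first by apply: nrs'; rewrite -e; apply: tree_refl.
Qed.

Lemma subbasic_basic_nbhd s0 A : tree_subbasic le A -> A s0 ->
  exists o, lower_end s0 o /\ basic_nbhd s0 o `<=` A.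
Proof.
move=> [b [->|->]] As0.
  by exists None; split=> // r [rs0 _]; apply: tree_trans rs0 As0.
have [m [[ms0 nmb] min_m]] : exists m, (le m s0 /\ ~ le m b) /\
    forall c, le c s0 /\ ~ le c b -> le m c.
  by apply: (@tree_min s0) => [c []//|]; exists s0; split=> //; apply: tree_refl.
have [ems0|nems0] := classic (m = s0); last first.
  exists (Some m); split=> // r [rs0 nrm] rb.
  have [//|mr] := tree_le_total rs0 ms0.
  by apply: nmb; apply: tree_trans mr rb.
have below : forall r, tl r s0 -> le r b.
  move=> r [rs0 nrs0]; apply: NNPP => nrb; apply: nrs0.
  by apply: (tree_antisym rs0); rewrite -ems0; apply: min_m.
have [lim|nlim] := classic (Defs.limit_point le s0).
  by exfalso; apply: As0; apply: limit_point_le.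
have [o [lo iso]] := nonlimit_isolated nlim.
by exists o; split=> // r /iso ->.
Qed.

Lemma subbasic_list_basic_nbhd s0 (l : seq (set T)) :
  Forall (tree_subbasic le) l -> (forall A, In A l -> A s0) ->
  exists o, lower_end s0 o /\ forall A, In A l -> basic_nbhd s0 o `<=` A.
Proof.
elim: l => [|A l IH] sub_l in_l; first by exists None.
have [o1 [e1 sub1]] := subbasic_basic_nbhd (List.Forall_inv sub_l) (in_l A (or_introl erefl)).
have [o2 [e2 sub2]] := IH (List.Forall_inv_tail sub_l) (fun B hB => in_l B (or_intror hB)).
have [o [e io1 io2]] := basic_nbhd_meet e1 e2.
exists o; split=> // B [<-|hB]; first exact: subset_trans io1 sub1.
exact: subset_trans io2 (sub2 B hB).
Qed.

Definition finitely_covered (C : set (set T)) (K : set T) : Prop :=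
  exists F : seq (set T), (forall U, In U F -> C U) /\
    K `<=` [set x | exists U, In U F /\ U x].

(* An uncovered (0, t] has a least uncovered (0, s0]; the basic neighbourhood of s0
   inside some member of the cover reaches down to a covered (0, s]. *)
Lemma compact_down t : tree_compact le (down t).
Proof.
move=> C open_C cover; apply: NNPP => ncov.
have [s0 [[s0t ncov0] min_s0]] : exists m, (le m t /\ ~ finitely_covered C (down m)) /\
    forall c, le c t /\ ~ finitely_covered C (down c) -> le m c.
  by apply: (@tree_min t) => [c []//|]; exists t; split=> //; apply: tree_refl.
have [U CU Us0] := cover s0 s0t.
have [l [sub_l in_l l_U]] := open_C U CU s0 Us0.
have [[s|] [lo io]] := subbasic_list_basic_nbhd sub_l in_l; last first.
  apply: ncov0; exists [:: U]; split=> [V [<-|[]]|r rs0] //.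
  by exists U; split; [left|apply: l_U => A /io; apply; split].
have [F [F_C F_cov]] : finitely_covered C (down s).
  apply: NNPP => ncov_s; apply: lo.2; apply: tree_antisym lo.1 _.
  by apply: min_s0; split=> //; apply: tree_trans lo.1 s0t.
apply: ncov0; exists (U :: F); split=> [V [<-|/F_C]|r rs0] //.
have [rs|nrs] := classic (le r s).
  by have [V [FV Vr]] := F_cov r rs; exists V; split=> //; right.
by exists U; split; [left|apply: l_U => A /io; apply; split].
Qed.

End TreeOrder.

Section TreeTopology.
Variables (T : Type) (le : T -> T -> Prop) (R : realType).

Definition close_nearby (f : T -> R) (x : T) (e : R) : Prop :=
  exists l, [/\ Forall (tree_subbasic le) l, (forall A, In A l -> A x) &
    forall y, (forall A, In A l -> A y) -> `|f y - f x| < e].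

Lemma tree_continuousP (f : T -> R) :
  tree_continuous le f <-> forall x e, 0 < e -> close_nearby f x e.
Proof.
split=> [fc x e e0|near_f V oV x Vfx].
  have [|l [sub_l in_l l_ball]] := fc (ball (f x) e) (ball_open _ _) x; first exact: ballxx.
  exists l; split=> // y /l_ball.
  by rewrite /= -ball_normE /= distrC.
have /nbhs_ballP [e e0 ballV] : nbhs (f x) V by apply: open_nbhs_nbhs.
have [l [sub_l in_l l_close]] := near_f x e e0.
exists l; split=> // y /l_close fy; apply: ballV.
by rewrite -ball_normE /= distrC.
Qed.

Lemma close_nearby2 (f g : T -> R) x e1 e2 : close_nearby f x e1 -> close_nearby g x e2 ->
  exists l, [/\ Forall (tree_subbasic le) l, (forall A, In A l -> A x) &
    forall y, (forall A, In A l -> A y) -> `|f y - f x| < e1 /\ `|g y - g x| < e2].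
Proof.
move=> [l1 [sub1 in1 close1]] [l2 [sub2 in2 close2]].
exists (l1 ++ l2)%list; split.
- exact/List.Forall_app.
- by move=> A /List.in_app_iff [/in1|/in2].
- by move=> y hy; split; [apply: close1|apply: close2] => A hA;
    apply: hy; apply/List.in_app_iff; [left|right].
Qed.

Lemma tree_continuous_cst (k : R) : tree_continuous le (fun _ => k).
Proof.
apply/tree_continuousP => x e e0; exists nil; split=> // y _.
by rewrite subrr normr0.
Qed.

Lemma tree_continuousD (f g : T -> R) : tree_continuous le f -> tree_continuous le g ->
  tree_continuous le (fun x => f x + g x).
Proof.
move=> /tree_continuousP fc /tree_continuousP gc; apply/tree_continuousP => x e e0.
have e20 : 0 < e / 2 by rewrite divr_gt0.
have [l [sub_l in_l l_close]] := close_nearby2 (fc x _ e20) (gc x _ e20).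
exists l; split=> // y /l_close [fy gy].
rewrite (splitr e); apply: le_lt_trans (ltrD fy gy).
have -> : f y + g y - (f x + g x) = (f y - f x) + (g y - g x) by ring.
exact: ler_normD.
Qed.

Lemma tree_continuousZ (a : R) (f : T -> R) : tree_continuous le f ->
  tree_continuous le (fun x => a * f x).
Proof.
move=> /tree_continuousP fc; apply/tree_continuousP => x e e0.
have a1 : 0 < `|a| + 1 by rewrite ltr_wpDl.
have [l [sub_l in_l l_close]] := fc x _ (divr_gt0 e0 a1).
exists l; split=> // y /l_close fy.
rewrite -mulrBr normrM; apply: le_lt_trans (_ : (`|a| + 1) * `|f y - f x| < e).
  by rewrite ler_wpM2r // lerDl.
by rewrite mulrC -ltr_pdivlMr.
Qed.

Lemma tree_open_norm_lt (h : T -> R) e : tree_continuous le h ->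
  tree_open le (~` [set x | e <= `|h x|]).
Proof.
move=> /tree_continuousP hc x /negP; rewrite -ltNge => hx.
have hx0 : 0 < e - `|h x| by rewrite subr_gt0.
have [l [sub_l in_l l_close]] := hc x _ hx0.
exists l; split=> // y /l_close hy /=; apply/negP; rewrite -ltNge.
have := ler_normD (h x) (h y - h x); rewrite addrC subrK; lra.
Qed.

Lemma tree_compact_subset (K K' : set T) : tree_compact le K -> K' `<=` K ->
  tree_open le (~` K') -> tree_compact le K'.
Proof.
move=> cK K'K oK' C open_C cover.
have [|x Kx|F [F_C F_cov]] := cK (C `|` [set ~` K']).
- by move=> U [/open_C|->].
- have [/cover [U CU Ux]|nK'x] := classic (K' x); first by exists U => //; left.
  by exists (~` K') => //; right.
exists (List.filter (fun U => `[< C U >]) F); split.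
  by move=> U /List.filter_In [_ /asboolP].
move=> x K'x; have [U [FU Ux]] := F_cov x (K'K x K'x).
exists U; split=> //; apply/List.filter_In; split=> //; apply/asboolP.
by case: (F_C U FU) => // EU; rewrite EU in Ux.
Qed.

Lemma tree_compactU (K1 K2 : set T) : tree_compact le K1 -> tree_compact le K2 ->
  tree_compact le (K1 `|` K2).
Proof.
move=> cK1 cK2 C open_C cover.
have [F1 [F1_C F1_cov]] := cK1 C open_C (fun x hx => cover x (or_introl hx)).
have [F2 [F2_C F2_cov]] := cK2 C open_C (fun x hx => cover x (or_intror hx)).
exists (F1 ++ F2)%list; split; first by move=> U /List.in_app_iff [/F1_C|/F2_C].
move=> x [/F1_cov|/F2_cov] [U [FU Ux]]; exists U; split=> //;
  apply/List.in_app_iff; by [left|right].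
Qed.

Lemma C0_cst0 : C0 le (fun _ : T => 0 : R).
Proof.
split=> [|e e0 C _ _]; first exact: tree_continuous_cst.
by exists nil; split=> // x /=; rewrite normr0 leNgt e0.
Qed.

Lemma C0D (f g : T -> R) : C0 le f -> C0 le g -> C0 le (fun x => f x + g x).
Proof.
move=> [fc fK] [gc gK]; have fgc := tree_continuousD fc gc; split=> // e e0.
have e20 : 0 < e / 2 by rewrite divr_gt0.
apply: tree_compact_subset (tree_compactU (fK _ e20) (gK _ e20)) _ _.
  move=> x /= fgx; have := ler_normD (f x) (g x).
  by case: (lerP (e / 2) `|f x|); case: (lerP (e / 2) `|g x|); try by [left|right]; lra.
exact: tree_open_norm_lt.
Qed.

Lemma C0Z (a : R) (f : T -> R) : C0 le f -> C0 le (fun x => a * f x).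
Proof.
move=> [fc fK]; split=> [|e e0]; first exact: tree_continuousZ.
have a1 : 0 < `|a| + 1 by rewrite ltr_wpDl.
apply: tree_compact_subset (fK _ (divr_gt0 e0 a1)) _ _.
  move=> x /= afx; rewrite ler_pdivrMr //; apply: le_trans afx _.
  by rewrite normrM mulrC ler_wpM2l // lerDl.
exact/tree_open_norm_lt/tree_continuousZ.
Qed.

Lemma C0B (f g : T -> R) : C0 le f -> C0 le g -> C0 le (fun x => f x - g x).
Proof.
move=> Cf Cg; have := C0D Cf (C0Z (-1) Cg).
by under eq_fun do rewrite mulN1r.
Qed.

(* A finite cover of {1 <= |f|} by preimages of unit balls bounds f. *)
Lemma C0_bounded (f : T -> R) : C0 le f -> exists M, forall x, `|f x| <= M.
Proof.
move=> [fc fK].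
pose C := [set U | tree_open le U /\ exists M, forall x, U x -> `|f x| <= M].
have [|x fx|F [F_C F_cov]] := fK 1 ltr01 C; first by move=> U [].
  exists (f @^-1` ball (f x) 1); last exact: ballxx.
  split; first exact/fc/ball_open.
  exists (`|f x| + 1) => y; rewrite /= -ball_normE /= distrC => fy.
  by have := ler_normD (f x) (f y - f x); rewrite addrC subrK; lra.
have [M F_M] : exists M, forall U, In U F -> forall x, U x -> `|f x| <= M.
  elim: F F_C {F_cov} => [|U F IH] F_C; first by exists 0.
  have [_ [M1 UM1]] := F_C U (or_introl erefl).
  have [M2 FM2] := IH (fun V FV => F_C V (or_intror FV)).
  exists (Num.max M1 M2) => V [<-|FV] x Vx; rewrite le_max.
    by rewrite UM1.
  by rewrite (FM2 V FV x Vx) orbT.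
exists (Num.max M 1) => x; rewrite le_max.
have [/F_cov [U [FU Ux]]|/ltW ->] := lerP 1 `|f x|; last by rewrite orbT.
by rewrite (F_M U FU x Ux).
Qed.

Lemma supnorm_le (f : T -> R) B : 0 <= B -> (forall x, `|f x| <= B) -> supnorm f <= B.
Proof.
move=> B0 fB; have [[x _]|] := pselect (exists x : T, True).
  by apply: ge_sup => [|_ [y _ <-]]; [exists `|f x|, x|].
move=> nT; have empty : range (fun x => `|f x|) = set0.
  by apply/seteqP; split=> // z [y _ _]; apply: nT; exists y.
by rewrite /supnorm empty sup0.
Qed.

Lemma normr_le_supnorm (f : T -> R) x : C0 le f -> `|f x| <= supnorm f.
Proof.
move=> /C0_bounded [M fM]; apply: ub_le_sup; last by exists x.
by exists M => _ [y _ <-].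
Qed.

Hypothesis tree : is_tree le.

Lemma C0_indicator t : C0 le (fun x => \1_(Defs.down le t) x : R).
Proof.
have indicator_cont : tree_continuous le (fun x => \1_(Defs.down le t) x : R).
  apply/tree_continuousP => x e e0.
  have [xt|nxt] := classic (Defs.down le t x).
  - exists [:: Defs.down le t]; split=> [|A [<-|[]]//|y /(_ _ (or_introl erefl)) yt].
      by constructor=> //; exists t; left.
    by rewrite !indicE !mem_set // subrr normr0.
  - exists [:: ~` Defs.down le t]; split=> [|A [<-|[]]//|y /(_ _ (or_introl erefl)) nyt].
      by constructor=> //; exists t; right.
    by rewrite !indicE !memNset // subrr normr0.
split=> // e e0; apply: tree_compact_subset (compact_down (t:=t) tree) _ _.
  move=> x /=; apply: contraPP => nxt; rewrite indicE memNset // normr0.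
  by apply/negP; rewrite -ltNge.
exact: tree_open_norm_lt.
Qed.

End TreeTopology.

Section NormedC0.
Variables (T : Type) (le : T -> T -> Prop) (R : realType) (N : (T -> R) -> R).
Hypothesis norm_N : equiv_norm le N.

Lemma N_ge0 f : C0 le f -> 0 <= N f.
Proof. by case: norm_N => h _ _ _ _; apply: h. Qed.

Lemma NZ (a : R) f : C0 le f -> N (fun x => a * f x) = `|a| * N f.
Proof. by case: norm_N => _ _ h _ _; apply: h. Qed.

Lemma ND_le f g : C0 le f -> C0 le g -> N (fun x => f x + g x) <= N f + N g.
Proof. by case: norm_N => _ _ _ h _; apply: h. Qed.

Lemma N_cst0 : N (fun _ => 0) = 0.
Proof.
have := NZ 0 (@C0_cst0 T le R).
by under eq_fun do rewrite mul0r; rewrite normr0 mul0r.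
Qed.

Lemma N_le_supnorm : exists2 C, 0 < C & forall f, C0 le f -> N f <= C * supnorm f.
Proof. by case: norm_N => _ _ _ _ [c [C [_ C_gt0 h]]]; exists C => // f /h []. Qed.

Lemma supnorm_le_N : exists2 c, 0 < c & forall f, C0 le f -> c * supnorm f <= N f.
Proof. by case: norm_N => _ _ _ _ [c [C [c0 _ h]]]; exists c => // f /h []. Qed.

Lemma functional_cst0 phi : cont_lin_functional le N phi -> phi (fun _ => 0) = 0.
Proof.
move=> [phi_lin _]; have := phi_lin 0 0 _ _ (@C0_cst0 T le R) (@C0_cst0 T le R).
by under eq_fun do rewrite mul0r addr0; rewrite !mul0r addr0.
Qed.

Lemma functionalZ phi (a : R) f : cont_lin_functional le N phi -> C0 le f ->
  phi (fun x => a * f x) = a * phi f.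
Proof.
move=> [phi_lin _] Cf; have := phi_lin a 0 f f Cf Cf.
by under eq_fun do rewrite mul0r addr0; rewrite mul0r addr0.
Qed.

Lemma functionalD phi f g : cont_lin_functional le N phi -> C0 le f -> C0 le g ->
  phi (fun x => f x + g x) = phi f + phi g.
Proof.
move=> [phi_lin _] Cf Cg; have := phi_lin 1 1 f g Cf Cg.
by under eq_fun do rewrite !mul1r; rewrite !mul1r.
Qed.

Definition wsum (w : nat -> R) (f : nat -> T -> R) (idx : seq nat) : T -> R :=
  fun x => \sum_(i <- idx) w i * f i x.

Lemma wsum_nil w f : wsum w f [::] = fun _ => 0.
Proof. by apply: funext => x; rewrite /wsum big_nil. Qed.

Lemma wsum_cons w f i idx : wsum w f (i :: idx) = fun x => w i * f i x + wsum w f idx x.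
Proof. by apply: funext => x; rewrite /wsum big_cons. Qed.

Lemma C0_wsum w f idx : (forall i, C0 le (f i)) -> C0 le (wsum w f idx).
Proof.
move=> Cf; elim: idx => [|i idx IH]; first by rewrite wsum_nil; apply: C0_cst0.
by rewrite wsum_cons; apply: C0D => //; apply: C0Z.
Qed.

Lemma N_wsum_le w f idx : (forall i, C0 le (f i)) ->
  N (wsum w f idx) <= \sum_(i <- idx) `|w i| * N (f i).
Proof.
move=> Cf; elim: idx => [|i idx IH]; first by rewrite wsum_nil N_cst0 big_nil.
rewrite wsum_cons big_cons; apply: le_trans (ND_le (C0Z _ (Cf i)) (C0_wsum _ _ Cf)) _.
by rewrite NZ // lerD2l.
Qed.

Lemma functional_wsum phi w f idx : cont_lin_functional le N phi ->
  (forall i, C0 le (f i)) -> phi (wsum w f idx) = \sum_(i <- idx) w i * phi (f i).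
Proof.
move=> phi_lin Cf; elim: idx => [|i idx IH].
  by rewrite wsum_nil big_nil functional_cst0.
rewrite wsum_cons big_cons -IH -functionalZ //.
by apply: functionalD => //; [apply: C0Z | apply: C0_wsum].
Qed.

Definition disjoint_supports (f : nat -> T -> R) : Prop :=
  forall i j x, f i x != 0 -> f j x != 0 -> i = j.

Lemma wsum_disjoint_le w f idx r B : uniq idx -> disjoint_supports f ->
  (forall i, `|w i| <= r) -> (forall i x, `|f i x| <= B) -> 0 <= r -> 0 <= B ->
  forall x, `|wsum w f idx x| <= r * B.
Proof.
move=> uidx disj wr fB r0 B0 x.
have [[i i_idx fx]|none] := pselect (exists2 i, i \in idx & f i x != 0); last first.
  rewrite /wsum big_seq big1 ?normr0 ?mulr_ge0 // => i i_idx.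
  have [-> |fx] := eqVneq (f i x) 0; first by rewrite mulr0.
  by exfalso; apply: none; exists i.
rewrite /wsum (bigD1_seq i) //= big1 => [|j ji]; first by rewrite addr0 normrM ler_pM.
have [-> |fjx] := eqVneq (f j x) 0; first by rewrite mulr0.
by rewrite (disj _ _ _ fjx fx) eqxx in ji.
Qed.

Section DisjointlySupported.
Variables (p : nat -> T -> R) (B : R).
Hypotheses (Cp : forall n, C0 le (p n)) (disjoint_p : disjoint_supports p).
Hypotheses (B_ge0 : 0 <= B) (p_le : forall n x, `|p n x| <= B).

(* With the signs of phi (p i) as weights, the partial sums are values of phi
   at functions of supremum norm at most B. *)
Lemma functional_series_bounded phi : cont_lin_functional le N phi ->
  exists L, forall n, \sum_(0 <= i < n) `|phi (p i)| <= L.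
Proof.
move=> phi_lin; have [_ [M phiM]] := phi_lin.
have [C C_gt0 NC] := N_le_supnorm.
exists (`|M| * (C * B)) => n.
pose w i : R := if 0 <= phi (p i) then 1 else -1.
have -> : \sum_(0 <= i < n) `|phi (p i)| = phi (wsum w p (index_iota 0 n)).
  rewrite functional_wsum //; apply: eq_bigr => i _; rewrite /w.
  by case: ifP => [/ger0_norm ->|/negbT]; rewrite ?mul1r // -ltNge mulN1r => /ltr0_norm.
have Cw := C0_wsum w (index_iota 0 n) Cp.
apply: le_trans (ler_norm _) _; apply: le_trans (phiM _ Cw) _.
apply: le_trans (ler_wpM2r (N_ge0 Cw) (ler_norm M)) _.
apply: ler_wpM2l => //; apply: le_trans (NC _ Cw) _.
rewrite ler_pM2l //; apply: supnorm_le => // x.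
rewrite -[B]mul1r; apply: wsum_disjoint_le => // [|i]; first exact: iota_uniq.
by rewrite /w; case: ifP; rewrite ?normrN normr1.
Qed.

Lemma functional_cvg0 phi : cont_lin_functional le N phi ->
  phi (p n) @[n --> \oo] --> 0.
Proof.
move=> /functional_series_bounded [L sumL].
apply: norm_cvg0; apply: cvg_series_cvg_0.
apply: nondecreasing_is_cvgn; first by apply: nondecreasing_series => n _ _.
by exists L => _ [n _ <-]; apply: sumL.
Qed.

(* Averaging y + p i over K consecutive indices leaves y plus an average of K
   disjointly supported functions, whose norm is O(1/K). *)
Lemma N_le_of_perturbation_cvg y m : C0 le y ->
  N (fun x => y x + p n x) @[n --> \oo] --> m -> N y <= m.
Proof.
move=> Cy Nz_cvg; apply/ler_addgt0Pr => e e0.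
have e20 : 0 < e / 2 by rewrite divr_gt0.
have [n0 _ Nz_lt] := cvgr_dist_lt _ _ Nz_cvg _ e20.
have [C C_gt0 NC] := N_le_supnorm.
pose K := (Num.Def.archi_bound (C * B / (e / 2))).+1.
have K0 : 0 < K%:R :> R by rewrite ltr0n.
have CBK : C * (K%:R^-1 * B) <= e / 2.
  have : C * B / (e / 2) < K%:R.
    apply: lt_le_trans (archi_boundP _) _; first by rewrite divr_ge0 ?mulr_ge0 // ltW.
    by rewrite ler_nat.
  rewrite ltr_pdivrMr // => /ltW CBe.
  have -> : C * (K%:R^-1 * B) = C * B / K%:R by ring.
  by rewrite ler_pdivrMr // [e / 2 * _]mulrC.
pose w := fun _ : nat => K%:R^-1 : R.
pose idx := index_iota n0 (n0 + K).
have Cz : forall n, C0 le (fun x => y x + p n x) by move=> n; apply: C0D.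
have Ey : y = fun x => wsum w (fun n x => y x + p n x) idx x + (-1) * wsum w p idx x.
  apply: funext => x; rewrite mulN1r /wsum -sumrN -big_split /=.
  under eq_bigr do rewrite mulrDr addrK.
  by rewrite /idx /w sumr_const_nat addKn -[_ *+ K]mulr_natr mulrAC mulVf ?mul1r ?gt_eqF.
rewrite {1}Ey; apply: le_trans (ND_le (C0_wsum _ _ Cz) (C0Z _ (C0_wsum _ _ Cp))) _.
rewrite NZ ?normrN ?normr1 ?mul1r; last exact: C0_wsum.
have Kinv_ge0 : 0 <= K%:R^-1 :> R by rewrite invr_ge0 ltW.
rewrite [e]splitr addrA; apply: lerD.
  apply: le_trans (N_wsum_le _ _ Cz) _.
  apply: le_trans (_ : \sum_(n0 <= i < n0 + K) K%:R^-1 * (m + e / 2) <= _).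
    apply: ler_sum_nat => i /andP [n0i _]; rewrite /w ger0_norm //.
    apply: ler_wpM2l => //; apply/ltW/ltr_distlDr.
    by rewrite distrC; apply: Nz_lt.
  by rewrite sumr_const_nat addKn -[_ *+ K]mulr_natr mulrAC mulVf ?mul1r ?gt_eqF.
apply: le_trans (NC _ (C0_wsum _ _ Cp)) _; apply: le_trans CBK.
rewrite ler_pM2l //; apply: supnorm_le => [|x]; first exact: mulr_ge0.
apply: wsum_disjoint_le => // [|i]; first exact: iota_uniq.
by rewrite /w ger0_norm.
Qed.

End DisjointlySupported.
End NormedC0.

Lemma near_In_all (A B : Type) (F : set_system A) (FF : Filter F) (l : seq B)
    (P : B -> A -> Prop) :
  (forall b, In b l -> \forall a \near F, P b a) -> \forall a \near F, forall b, In b l -> P b a.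
Proof.
elim: l => [|b l IH] Pl; first exact: nearW.
apply: filterS2 (Pl b (or_introl erefl)) (IH (fun c cl => Pl c (or_intror cl))).
by move=> a Pba Pla c [<-|/Pla].
Qed.

Fixpoint history (A : Type) (u : nat -> A) (n : nat) : seq A :=
  if n is k.+1 then u k :: history u k else [::].

Lemma In_history (A : Type) (u : nat -> A) i n : (i < n)%N -> In (u i) (history u n).
Proof.
elim: n => [|n IH] //=; rewrite ltnS leq_eqVlt => /orP [/eqP ->|/IH]; by [left|right].
Qed.

Lemma choice_with_history (A : Type) (P : nat -> seq A -> A -> Prop) :
  (forall n s, exists a, P n s a) -> exists u : nat -> A, forall n, P n (history u n) (u n).
Proof.
move=> /(_ _ _)/cid choose; pose g n s := sval (choose n s).
pose fix trace n : seq A := if n is k.+1 then g k (trace k) :: trace k else [::].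
exists (fun n => g n (trace n)) => n.
suff -> : history (fun n => g n (trace n)) n = trace n by exact: svalP.
by elim: n => [|n IH] //=; rewrite IH.
Qed.

Lemma finite_set_In (A : Type) (s : seq A) : finite_set [set x | In x s].
Proof.
elim: s => [|a s IH]; first by rewrite (_ : [set x | In x [::]] = set0) //; apply/seteqP.
apply: sub_finite_set (_ : _ `<=` [set a] `|` [set x | In x s]) _.
  by move=> x [->|xs]; [left|right].
by rewrite finite_setU; split=> //; apply: finite_set1.
Qed.

Section Kadec.
Variables (T : Type) (le : T -> T -> Prop) (R : realType) (N : (T -> R) -> R).
Hypotheses (norm_N : equiv_norm le N) (kadec_N : kadec le N).

Lemma kadec_norm_approx x (S : set (T -> R)) :
  unit_sphere le N x -> S `<=` unit_sphere le N ->
  (forall l d, 0 < d -> Forall (cont_lin_functional le N) l ->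
     exists2 g, S g & forall phi, In phi l -> `|phi g - phi x| < d) ->
  forall del, 0 < del -> exists2 g, S g & N (fun s => g s - x s) < del.
Proof.
move=> [Cx Nx] S_sphere weak del del0.
pose V := [set g : T -> R | N (fun s => g s - x s) < del].
have V_open : norm_open le N V.
  move=> f Cf Vf; exists (del - N (fun s => f s - x s)); split; first by rewrite subr_gt0.
  move=> g Cg gf; rewrite /V /=.
  have -> : (fun s => g s - x s) = (fun s => (g s - f s) + (f s - x s)).
    by apply: funext => s; ring.
  apply: le_lt_trans (ND_le norm_N (C0B Cg Cf) (C0B Cf Cx)) _.
  by rewrite -ltrBrDr.
have [W [W_weak EW]] : exists W, weak_open le N W /\
    V `&` unit_sphere le N = W `&` unit_sphere le N.
  by have [|W [? ?]] := (kadec_N (V `&` unit_sphere le N)).2; [exists V|exists W].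
have [l [d [d0 l_lin l_W]]] : exists l d, [/\ 0 < d, Forall (cont_lin_functional le N) l &
    forall g, C0 le g -> (forall phi, In phi l -> `|phi g - phi x| < d) -> W g].
  apply: W_weak => //.
  suff : (V `&` unit_sphere le N) x by rewrite EW => -[].
  by split=> //; rewrite /V /=; under eq_fun do rewrite subrr; rewrite (N_cst0 norm_N).
have [g Sg gx] := weak l d d0 l_lin.
exists g => //; have [Cg Ng] := S_sphere g Sg.
suff : (W `&` unit_sphere le N) g by rewrite -EW => -[].
by split=> //; apply: l_W.
Qed.

End Kadec.

Section Mu.
Variables (T : Type) (le : T -> T -> Prop) (R : realType) (N : (T -> R) -> R).
Hypotheses (tree : is_tree le) (norm_N : equiv_norm le N).
Local Notation mu := (mu le N).

Lemma mu_le t f : C0 le f -> (forall s, f s <> 0 -> tlt le t s) ->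
  mu t <= N (fun s => \1_(Defs.down le t) s + f s).
Proof.
move=> Cf f_supp; apply: ge_inf; last by exists f.
exists 0 => _ [g [Cg _] <-]; apply: (N_ge0 norm_N).
by apply: C0D => //; apply: C0_indicator.
Qed.

Lemma mu_ge0 t : 0 <= mu t.
Proof.
apply: lb_le_inf => [|_ [g [Cg _] <-]].
  by exists (N (fun s => \1_(Defs.down le t) s + 0)), (fun _ => 0); split=> //; apply: C0_cst0.
by apply: (N_ge0 norm_N); apply: C0D => //; apply: C0_indicator.
Qed.

Lemma mu_approx t e : 0 < e -> exists h : T -> R, [/\ C0 le h,
  (forall s, h s <> 0 -> tlt le t s) & N (fun s => \1_(Defs.down le t) s + h s) < mu t + e].
Proof.
move=> e0; rewrite /Defs.mu; set S := [set N _ | f in _].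
have S0 : S !=set0.
  by exists (N (fun s => \1_(Defs.down le t) s + 0)), (fun _ => 0); split=> //; apply: C0_cst0.
have lt_e : inf S < inf S + e by rewrite ltrDl.
have [_ [h [Ch h_supp] <-] hlt] := inf_lt S0 lt_e.
by exists h.
Qed.

Lemma bad_succs_seq t (e : nat -> R) : bad le mu t -> (forall n, 0 < e n) ->
  exists u : nat -> T, injective u /\ forall n, succs le t (u n) /\ mu (u n) < mu t + e n.
Proof.
move=> t_bad e0.
have step n s : exists a, [/\ ~ In a s, succs le t a & mu a < mu t + e n].
  pose F := [set x | In x s /\ succs le t x].
  have F_fin : finite_set F := sub_finite_set (fun x (Fx : F x) => proj1 Fx) (finite_set_In s).
  have inf_le : (ereal_inf [set (mu v)%:E | v in succs le t `\` F] <= (mu t)%:E)%E.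
    by rewrite leNgt; apply/negP => lt_inf; apply: t_bad; exists F; split=> // x [].
  have lt_e : ((mu t)%:E < (mu t + e n)%:E)%E by rewrite lte_fin ltrDl.
  have [_ [v [tv nFv] <-]] := ereal_inf_lt (le_lt_trans inf_le lt_e).
  by rewrite lte_fin => mu_v; exists v; split=> // vs; apply: nFv.
have [u u_hist] := choice_with_history step.
exists u; split=> [i j|n]; last by have [] := u_hist n.
have fresh k l : (k < l)%N -> u k <> u l.
  by move=> kl ukl; have [] := u_hist l; rewrite -ukl => /(_ (In_history u kl)).
by case: (ltngtP i j) => // [/fresh|/fresh /nesym].
Qed.

Lemma bad_perturbation_seq t : bad le mu t -> exists (u : nat -> T) (h : nat -> T -> R),
  [/\ injective u, forall n, succs le t (u n), forall n, C0 le (h n),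
      forall n s, h n s <> 0 -> tlt le (u n) s
    & forall n, N (fun s => \1_(Defs.down le (u n)) s + h n s) < mu t + n.+1%:R^-1].
Proof.
move=> t_bad; pose e n : R := n.+1%:R^-1 / 2.
have e0 n : 0 < e n by rewrite divr_gt0 // invr_gt0 ltr0n.
have [u [u_inj u_mu]] := bad_succs_seq t_bad e0.
have /choice [h hP] : forall n, exists h : T -> R, [/\ C0 le h,
    forall s, h s <> 0 -> tlt le (u n) s
  & N (fun s => \1_(Defs.down le (u n)) s + h s) < mu (u n) + e n].
  by move=> n; apply: mu_approx.
exists u, h; split=> [//|n|n|n|n]; try by have [] := hP n; have [] := u_mu n.
have [_ _ Nh] := hP n; have [_ mu_u] := u_mu n.
apply: lt_trans Nh _; rewrite [X in _ < _ + X]splitr addrA ltrD2r.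
exact: mu_u.
Qed.

End Mu.

Section BadPoint.
Variables (T : Type) (le : T -> T -> Prop) (R : realType) (N : (T -> R) -> R).
Hypotheses (tree : is_tree le) (norm_N : equiv_norm le N) (kadec_N : kadec le N).
Variables (t : T) (u : nat -> T) (h : nat -> T -> R).
Hypotheses (u_inj : injective u) (u_succ : forall n, succs le t (u n)).
Hypotheses (Ch : forall n, C0 le (h n)) (h_supp : forall n s, h n s <> 0 -> tlt le (u n) s).
Hypothesis z_lt : forall n,
  N (fun s => \1_(Defs.down le (u n)) s + h n s) < mu le N t + n.+1%:R^-1.

Let m := mu le N t.
Let y s : R := \1_(Defs.down le t) s.
Let p n s : R := \1_(Defs.down le (u n)) s + h n s - y s.

Let Cy : C0 le y. Proof. exact: C0_indicator. Qed.
Let Cp n : C0 le (p n). Proof. by apply: C0B => //; apply: C0D => //; apply: C0_indicator. Qed.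

Let z_eq n : (fun s => y s + p n s) = fun s => \1_(Defs.down le (u n)) s + h n s.
Proof. by apply: funext => s; rewrite /p addrC subrK. Qed.

Lemma perturbation_supp n s : p n s != 0 -> le (u n) s.
Proof.
move=> /eqP pns; apply: NNPP => nus; apply: pns; rewrite /p /y.
have -> : h n s = 0 by apply: NNPP => /h_supp [].
have [tu ntu] := succs_gt tree (u_succ n).
have same_down : (s \in Defs.down le (u n)) = (s \in Defs.down le t).
  apply/idP/idP => /set_mem sd; apply/mem_set.
    apply/(u_succ n); split=> [|esu]; first exact: sd.
    by apply: nus; rewrite esu; apply: (tree_refl tree).
  exact: (tree_trans tree (sd : le s t) tu).
by rewrite addr0 !indicE same_down subrr.
Qed.

Lemma perturbations_disjoint : disjoint_supports p.
Proof.
move=> i j s /perturbation_supp uis /perturbation_supp ujs; apply: u_inj.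
have [uij|uji] := tree_le_total tree uis ujs.
  exact: (succs_le_eq tree (u_succ i) (u_succ j) uij).
exact/esym/(succs_le_eq tree (u_succ j) (u_succ i) uji).
Qed.

Let z_ge n : m <= N (fun s => y s + p n s).
Proof.
apply: mu_le => // s /eqP /perturbation_supp us.
have [tu ntu] := succs_gt tree (u_succ n).
split; first exact: (tree_trans tree tu us).
by move=> ets; apply: ntu; apply: (tree_antisym tree tu); rewrite ets.
Qed.

Lemma perturbations_bounded : exists2 B, 0 <= B & forall n s, `|p n s| <= B.
Proof.
have [c c0 cN] := supnorm_le_N norm_N.
have m0 : 0 <= m := mu_ge0 tree norm_N t.
exists ((m + 1) / c + 1); first by rewrite addr_ge0 // divr_ge0 ?addr_ge0 // ltW.
move=> n s; rewrite /p; apply: le_trans (ler_normB _ _) _; apply: lerD.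
  have Cz : C0 le (fun s => \1_(Defs.down le (u n)) s + h n s).
    by apply: C0D => //; apply: C0_indicator.
  rewrite ler_pdivlMr // mulrC.
  apply: le_trans (ler_wpM2l (ltW c0) (normr_le_supnorm s Cz)) _.
  apply: le_trans (cN _ Cz) _; apply/ltW.
  by apply: lt_le_trans (z_lt n) _; rewrite lerD2l invf_le1 ?ler1n ?ltr0n.
by rewrite /y indicE; case: (_ \in _); rewrite ?normr1 ?normr0.
Qed.

Let z_cvg : N (fun s => y s + p n s) @[n --> \oo] --> m.
Proof.
apply: (squeeze_cvgr _ (cvg_cst m) (_ : m + harmonic n @[n --> \oo] --> m)).
  by apply: nearW => n; rewrite z_ge z_eq ltW.
by rewrite -[X in _ --> X]addr0; apply: cvgD; [exact: cvg_cst|exact: cvg_harmonic].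
Qed.

Lemma N_indicator_eq_mu : N y = m.
Proof.
apply/eqP; rewrite eq_le; apply/andP; split.
  have [B B0 pB] := perturbations_bounded.
  exact: (N_le_of_perturbation_cvg norm_N Cp perturbations_disjoint B0 pB Cy z_cvg).
have := mu_le tree norm_N (C0_cst0 le R) (t:=t) (fun s f0 => False_ind _ (f0 erefl)).
by under eq_fun do rewrite addr0.
Qed.

Let m_gt0 : 0 < m.
Proof.
have [c c0 cN] := supnorm_le_N norm_N.
rewrite -N_indicator_eq_mu; apply: lt_le_trans (cN _ Cy); rewrite mulr_gt0 //.
apply: lt_le_trans ltr01 (le_trans _ (normr_le_supnorm t Cy)).
by rewrite /y indicE mem_set ?normr1 //; exact: (tree_refl tree).
Qed.

Let g n s : R := (N (fun s => y s + p n s))^-1 * (y s + p n s).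
Let x0 s : R := m^-1 * y s.

Lemma normalized_weak_cvg phi : cont_lin_functional le N phi ->
  phi (g n) @[n --> \oo] --> phi x0.
Proof.
move=> phi_lin.
have -> : phi x0 = m^-1 * (phi y + 0) by rewrite addr0 (functionalZ _ phi_lin Cy).
have -> : (fun n => phi (g n)) = fun n => (N (fun s => y s + p n s))^-1 * (phi y + phi (p n)).
  apply: funext => n.
  by rewrite (functionalZ _ phi_lin (C0D Cy (Cp n))) (functionalD phi_lin Cy (Cp n)).
apply: cvgM; first by apply: cvgV; [rewrite gt_eqF|exact: z_cvg].
apply: cvgD; first exact: cvg_cst.
have [B B0 pB] := perturbations_bounded.
exact: (functional_cvg0 norm_N Cp perturbations_disjoint B0 pB phi_lin).
Qed.

Let Cg n : C0 le (g n). Proof. exact/C0Z/C0D. Qed.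
Let Cx0 : C0 le x0. Proof. exact: C0Z. Qed.

Let z_gt0 n : 0 < N (fun s => y s + p n s).
Proof. exact: lt_le_trans m_gt0 (z_ge n). Qed.

Lemma normalized_far : exists2 del, 0 < del & forall n, del <= N (fun s => g n s - x0 s).
Proof.
have [c c0 cN] := supnorm_le_N norm_N.
exists (c / (m + 1)) => [|n]; first by rewrite divr_gt0 // addr_gt0.
have z_un : y (u n) + p n (u n) = 1.
  have -> : y (u n) + p n (u n) = \1_(Defs.down le (u n)) (u n) + h n (u n).
    by have := congr1 (fun f => f (u n)) (z_eq n).
  have -> : h n (u n) = 0 by apply: NNPP => /h_supp [].
  by rewrite addr0 indicE mem_set //; apply: (tree_refl tree).
have y_un : y (u n) = 0.
  rewrite /y indicE memNset // => unt; have [tu ntu] := succs_gt tree (u_succ n).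
  exact: ntu (tree_antisym tree tu unt).
have Cd := C0B (Cg n) Cx0.
apply: le_trans (cN _ Cd); apply: le_trans (ler_wpM2l (ltW c0) (normr_le_supnorm (u n) Cd)).
rewrite /g /x0 z_un y_un mulr1 mulr0 subr0 gtr0_norm ?invr_gt0 //.
rewrite ler_pM2l // lef_pV2 ?posrE ?(z_gt0 n) ?addr_gt0 //; apply: ltW.
rewrite z_eq; apply: lt_le_trans (z_lt n) _.
by rewrite lerD2l invf_le1 ?ler1n ?ltr0n.
Qed.

Lemma bad_point_absurd : False.
Proof.
have [del del0 far] := normalized_far.
have unit_N f : 0 < N f -> C0 le f -> N (fun s => (N f)^-1 * f s) = 1.
  by move=> Nf0 Cf; rewrite (NZ norm_N) // gtr0_norm ?invr_gt0 // mulVf ?gt_eqF.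
have x0_sphere : unit_sphere le N x0.
  by split=> //; rewrite /x0 -N_indicator_eq_mu; apply: unit_N; rewrite ?N_indicator_eq_mu.
have g_sphere : range g `<=` unit_sphere le N.
  by move=> _ [n _ <-]; split=> //; apply: unit_N (z_gt0 n) _; apply: C0D.
have [|_ [n _ <-]] := kadec_norm_approx norm_N kadec_N x0_sphere g_sphere _ del0.
  move=> l d d0 l_lin.
  have l_close : \forall n \near \oo, forall phi, In phi l -> `|phi x0 - phi (g n)| < d.
    apply: near_In_all => phi phil.
    have phi_lin := (List.Forall_forall _ _).1 l_lin phi phil.
    exact: (cvgr_dist_lt _ _ (normalized_weak_cvg phi_lin) _ d0).
  have [n close] := filter_ex l_close.
  by exists (g n) => [|phi /close]; [exists n|rewrite distrC].
by rewrite ltNge far.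
Qed.

End BadPoint.

Unset Implicit Arguments.
Theorem proposition3p2 (R : realType) (T : Type) (le : T -> T -> Prop)
    (N : (T -> R) -> R) :
  is_tree le -> equiv_norm le N -> kadec le N ->
  forall t : T, ~ bad le (mu le N) t.
Proof.
move=> tree norm_N kadec_N t t_bad.
have [u [h [u_inj u_succ Ch h_supp z_lt]]] := bad_perturbation_seq t_bad.
exact: (bad_point_absurd tree norm_N kadec_N u_inj u_succ Ch h_supp z_lt).
Qed.
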